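(* Let $\varepsilon>0$ and $n\ge 2$. Consider a colouring of the edges of $\overleftrightarrow{K}_n$ in which at least $(1+\varepsilon)\binom{n}{2}$ edges are blue. Then for every oriented tree $T$ with $|T|\le\lceil\varepsilon n/2\rceil$ there is a copy of $T$ all of whose edges are blue.
   Context: $\overleftrightarrow{K}_n$ is the complete directed graph on $n$ vertices: it has an edge $xy$ for every ordered pair $(x,y)$ of distinct vertices. An oriented tree is a directed graph without loops or bidirected edges whose underlying graph is a tree; $|T|$ is its number of vertices. *)

From HB Require Import structures.
From mathcomp Require Import all_boot all_order all_algebra.
Set Implicit Arguments. Unset Strict Implicit. Unset Printing Implicit Defensive.
Import Order.TTheory GRing.Theory Num.Theory.

Definition undirected (V : finType) (E : rel V) : rel V :=
  fun x y => E x y || E y x.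

Definition oriented (V : finType) (E : rel V) : Prop :=
  (forall x, ~~ E x x) /\ (forall x y, E x y -> ~~ E y x).

Definition ug_connected (V : finType) (E : rel V) : Prop :=
  forall x y, connect (undirected E) x y.

Definition ug_acyclic (V : finType) (E : rel V) : Prop :=
  forall (c : seq V), 3 <= size c -> uniq c -> ~~ cycle (undirected E) c.

Definition oriented_tree (V : finType) (E : rel V) : Prop :=
  [/\ 0 < #|V|, oriented E, ug_connected E & ug_acyclic E].

Definition blue_copy (n : nat) (blue : rel 'I_n) (V : finType) (E : rel V) : Prop :=
  exists f : V -> 'I_n, injective f /\ (forall x y, E x y -> blue (f x) (f y)).

Definition num_blue (n : nat) (blue : rel 'I_n) : nat :=
  #|[set e : 'I_n * 'I_n | (e.1 != e.2) && blue e.1 e.2]|.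

(* Call a pair of vertices double-blue if both edges between them are blue.  A pair
   that is not double-blue carries at most one blue edge, so the density hypothesis
   forces the graph of double-blue pairs to have average degree at least
   [eps (n - 1)].  Repeatedly deleting vertices of degree less than
   [d = ceil (eps n / 2) - 1] therefore leaves a nonempty subgraph of minimum
   degree [d], into which every tree on at most [d + 1] vertices embeds greedily,
   one pendant vertex at a time.  Whatever the orientation of a tree edge, its
   image is a double-blue pair, hence blue in the required direction. *)

From HB Require Import structures.
From mathcomp Require Import all_boot all_order all_algebra.
From mathcomp Require Import zify lra.
Set Implicit Arguments. Unset Strict Implicit. Unset Printing Implicit Defensive.

Definition tree_rel (V : finType) (r : rel V) : Prop :=
  [/\ symmetric r, irreflexive r, forall x y, connect r x y &
      forall c : seq V, 2 < size c -> uniq c -> ~~ cycle r c].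

Definition pendant (V : finType) (r : rel V) (v u : V) : Prop :=
  r v u /\ forall w, r v w -> w = u.

Section Pendant.
Variables (V : finType) (r : rel V).
Hypothesis r_tree : tree_rel r.

Lemma pendant_path_head x y p : path r x (y :: p) -> uniq [:: x, y & p] ->
  {subset r x <= [:: x, y & p]} -> pendant r x y.
Proof.
case: r_tree => rsym rirr _ racyc Hp Hu Hsub.
have rxy : r x y by case/andP: Hp.
split=> // w rxw; have := Hsub w rxw; rewrite !inE => /or3P [/eqP wx|/eqP //|wp].
  by rewrite wx rirr in rxw.
exfalso; case/splitPr: wp Hp Hu => p1 p2 Hp Hu.
have Hu' : uniq [:: x, y & rcons p1 w].
  by move: Hu; rewrite -cat_rcons -!cat_cons cat_uniq => /andP [].
have Hs : 2 < size [:: x, y & rcons p1 w] by rewrite /= size_rcons.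
have /negP := racyc _ Hs Hu'; apply.
move: Hp; rewrite -cat_rcons -cat_cons cat_path => /andP [Hp _].
by rewrite /cycle rcons_path Hp /= last_rcons rsym.
Qed.

(* Extend the path at its head while possible (at most [m] more times); its head
   is then a pendant vertex. *)
Lemma pendant_of_path m x p : #|V| - size (x :: p) <= m -> path r x p ->
  uniq (x :: p) -> p != [::] -> exists v u, pendant r v u.
Proof.
have stuck y q : path r y q -> uniq (y :: q) -> q != [::] ->
    {subset r y <= y :: q} -> exists v u, pendant r v u.
  case: q => [//|w q] Hp Hu _ Hsub; exists y, w.
  exact: pendant_path_head Hp Hu Hsub.
case: r_tree => rsym _ _ _.
elim: m x p => [|m IH] x p Hm Hp Hu p_nil;
  have [z /andP [rxz zNp]|Hno] := pickP [pred z | r x z & z \notin x :: p];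
  try by apply: (stuck x p) => // z; rewrite unfold_in => rxz;
      apply/negPn/negP => zN; have := Hno z; rewrite /= rxz zN.
- have /card_uniqP zxp : uniq [:: z, x & p] by rewrite /= zNp.
  by have := max_card (mem [:: z, x & p]); move: Hm; rewrite zxp /=; lia.
- apply: (IH z (x :: p)) => //=; first by move: Hm => /=; lia.
  + by rewrite rsym rxz.
  + by rewrite zNp.
Qed.

Lemma exists_pendant (x y : V) : x != y -> exists v u, pendant r v u.
Proof.
case: r_tree => _ rirr rconn _ xy.
have /connectP [[|w q] Hq Ey] := rconn x y; first by rewrite Ey /= eqxx in xy.
have /andP [rxw _] := Hq.
apply: (@pendant_of_path #|V| x [:: w]); rewrite ?leq_subr //= ?rxw //.
by rewrite inE andbT; apply: contraTneq rxw => ->; rewrite rirr.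
Qed.
End Pendant.

Lemma connect_relpre_val (V : finType) (P : pred V) (r : rel V) p :
  forall a b : {x | P x}, path r (val a) p -> all P p -> val b = last (val a) p ->
  connect (relpre val r) a b.
Proof.
elim: p => [a b _ _ /val_inj <- //|y p IH] a b /= /andP [ray Hp] /andP [Py Pp] Eb.
apply: connect_trans (IH (Sub y Py) b Hp Pp Eb); exact: connect1.
Qed.

Section PendantDeletion.
Variables (V : finType) (r : rel V) (v u : V).
Hypotheses (r_tree : tree_rel r) (v_pendant : pendant r v u).

Local Notation V' := {x : V | x != v}.

(* A shortest path between two other vertices cannot pass through [v]: both of
   its neighbours on the path would be [u]. *)
Lemma connect_delete_pendant (a b : V') : connect (relpre val r) a b.
Proof.
case: r_tree v_pendant => rsym _ rconn _ [_ v_u].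
have /connectP [p0 Hp0 Eb] := rconn (val a) (val b).
case/shortenP: Hp0 Eb => p Hp Hu _ Eb.
suff Pp : all (fun x => x != v) p by exact: connect_relpre_val Hp Pp Eb.
apply/allP => x xp; apply: contraTneq xp => ->.
apply/negP => vp; case/splitPr: vp Hp Hu Eb => p1 [|w p2] Hp Hu Eb.
  by move: (valP b); rewrite Eb last_cat eqxx.
move: Hp; rewrite cat_path /= => /and4P [_ rv' rvw _].
have vpre : last (val a) p1 = u by apply: v_u; rewrite rsym.
move: Hu; rewrite -cat_cons cat_uniq => /and3P [_ /hasPn /(_ w)].
by rewrite (v_u _ rvw) -vpre mem_last !inE eqxx orbT => /(_ isT).
Qed.

Lemma tree_rel_delete_pendant : tree_rel (relpre val r : rel V').
Proof.
case: r_tree => rsym rirr _ racyc; split.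
- by move=> a b; apply: rsym.
- by move=> a; apply: rirr.
- exact: connect_delete_pendant.
- move=> c Hs Hu; rewrite -cycle_map; apply: racyc; first by rewrite size_map.
  by rewrite map_inj_uniq //; apply: val_inj.
Qed.

Definition extend_at (T : Type) (f : V' -> T) (z : T) (x : V) : T :=
  if insub x is Some a then f a else z.

Lemma extend_at_val T f (z : T) (a : V') : extend_at f z (val a) = f a.
Proof. by rewrite /extend_at valK. Qed.

Lemma extend_at_pendant T f (z : T) : extend_at f z v = z.
Proof. by rewrite /extend_at insubF ?eqxx. Qed.

Variant delete_pendant_spec (x : V) : Prop :=
  | IsPendant of x = v
  | IsKept (a : V') of x = val a.

Lemma delete_pendantP x : delete_pendant_spec x.
Proof. by case: (eqVneq x v) => [->|xv]; [left | right with (Sub x xv)]. Qed.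

Lemma extend_at_embedding (T : eqType) (g : rel T) (f : V' -> T) z :
  symmetric g -> injective f -> (forall a b, r (val a) (val b) -> g (f a) (f b)) ->
  (forall a, val a = u -> g (f a) z) -> z \notin codom f ->
  injective (extend_at f z) /\ forall x y, r x y -> g (extend_at f z x) (extend_at f z y).
Proof.
case: r_tree v_pendant => rsym rirr _ _ [_ v_u] gsym f_inj f_hom f_z z_fresh.
have z_neq a : z != f a by apply: contraNneq z_fresh => ->; apply: codom_f.
split.
- move=> x y.
  case: (delete_pendantP x) => [->|a ->]; case: (delete_pendantP y) => [->|b ->];
    rewrite ?extend_at_val ?extend_at_pendant //.
  + by move/eqP; rewrite (negbTE (z_neq b)).
  + by move/eqP; rewrite eq_sym (negbTE (z_neq a)).
  + by move/f_inj ->.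
- move=> x y.
  case: (delete_pendantP x) => [->|a ->]; case: (delete_pendantP y) => [->|b ->];
    rewrite ?extend_at_val ?extend_at_pendant.
  + by rewrite rirr.
  + by move/v_u => /f_z; rewrite gsym.
  + by rewrite rsym => /v_u /f_z.
  + exact: f_hom.
Qed.
End PendantDeletion.

Section GreedyEmbedding.
Variables (T : finType) (g : rel T) (S : {set T}) (d : nat) (x0 : T).
Hypotheses (gsym : symmetric g) (girr : irreflexive g) (S_x0 : x0 \in S).
Hypothesis S_mindeg : forall x, x \in S -> d <= #|[set y in S | g x y]|.

Lemma exists_fresh_neighbour (A : {set T}) y : y \in S -> y \in A -> #|A| <= d ->
  exists2 z, z \in S & g y z && (z \notin A).
Proof.
move=> Sy Ay A_le.
have [z /and3P [Sz gyz zA]|none] := pickP [pred z | [&& z \in S, g y z & z \notin A]].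
  by exists z; rewrite ?gyz.
have sub : [set z in S | g y z] \subset A :\ y.
  apply/subsetP => z; rewrite !inE => /andP [Sz gyz].
  have := none z; rewrite /= Sz gyz /= => /negbFE ->; rewrite andbT.
  by apply: contraTneq gyz => ->; rewrite girr.
have := subset_leq_card sub; have := S_mindeg Sy.
by rewrite (cardsD1 y A) Ay in A_le; lia.
Qed.

Lemma embed_le1 (V : finType) (r : rel V) : irreflexive r -> #|V| <= 1 ->
  exists f : V -> T,
    [/\ injective f, forall x, f x \in S & forall x y, r x y -> g (f x) (f y)].
Proof.
move=> rirr /card_le1P V_le1.
have Vsingle (x y : V) : x = y by have := V_le1 y isT x; rewrite !inE => /esym/eqP.
by exists (fun=> x0); split=> // x y; rewrite (Vsingle x y) // rirr.
Qed.

Lemma embed_tree k (V : finType) (r : rel V) : tree_rel r -> #|V| <= k.+1 -> k <= d ->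
  exists f : V -> T,
    [/\ injective f, forall x, f x \in S & forall x y, r x y -> g (f x) (f y)].
Proof.
elim: k V r => [|k IH] V r r_tree V_le k_le;
  have [V_le1|V_gt1] := leqP #|V| 1; try by apply: embed_le1; case: r_tree.
have /card_gt1P [x [y [_ _ xy]]] := V_gt1.
have [v [u [rvu v_u]]] := exists_pendant r_tree xy.
have uv : u != v by apply: contraTneq rvu => ->; case: r_tree => _ ->.
have V'_card : #|{: {x : V | x != v}}| = #|V|.-1 by rewrite card_sig cardC1.
have [||f [f_inj f_S f_hom]] := IH _ _ (tree_rel_delete_pendant r_tree (conj rvu v_u)).
- by rewrite V'_card; lia.
- exact: ltnW.
pose a : {x : V | x != v} := Sub u uv.
have [||z Sz /andP [gz z_fresh]] :=
  @exists_fresh_neighbour [set w in codom f] (f a) (f_S a).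
- by rewrite inE codom_f.
- by rewrite cardsE card_codom // V'_card; lia.
have f_z b : val b = u -> g (f b) z by move=> bu; rewrite (val_inj (bu : val b = val a)).
rewrite inE in z_fresh.
have [ext_inj ext_hom] :=
  extend_at_embedding r_tree (conj rvu v_u) gsym f_inj f_hom f_z z_fresh.
exists (extend_at f z); split=> // w.
by case: (delete_pendantP v w) => [|b] ->; rewrite ?extend_at_val ?extend_at_pendant.
Qed.
End GreedyEmbedding.

Section Peeling.
Variables (T : finType) (g : rel T) (d : nat).
Hypotheses (gsym : symmetric g) (girr : irreflexive g).

Definition deg_in (S : {set T}) a := \sum_(b in S) g a b.
Definition deg_sum (S : {set T}) := \sum_(a in S) deg_in S a.

Lemma deg_inE (S : {set T}) a : deg_in S a = #|[set b in S | g a b]|.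
Proof.
rewrite -sum1_card big_mkcond [LHS]big_mkcond.
by apply: eq_bigr => b _; rewrite inE; case: (b \in S).
Qed.

Lemma deg_inD1 (S : {set T}) x a : x \in S -> deg_in S a = g a x + deg_in (S :\ x) a.
Proof.
move=> Sx; rewrite /deg_in (bigD1 x) //=; congr (_ + _).
by apply: eq_bigl => b; rewrite !inE andbC.
Qed.

Lemma deg_sumD1 (S : {set T}) x : x \in S -> deg_sum S = deg_sum (S :\ x) + (deg_in S x).*2.
Proof.
move=> Sx; rewrite /deg_sum (bigD1 x) //= (eq_bigr _ (fun a _ => deg_inD1 a Sx)) big_split /=.
have -> : \sum_(a in S | a != x) g a x = deg_in S x.
  by rewrite /deg_in [RHS](bigD1 x) //= girr; apply: eq_bigr => b _; rewrite gsym.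
have -> : \sum_(a in S | a != x) deg_in (S :\ x) a = deg_sum (S :\ x).
  by apply: eq_bigl => b; rewrite !inE andbC.
by rewrite -addnn /deg_sum; lia.
Qed.

(* Deleting a vertex of degree [< d] lowers the left side by [2d] and the right
   side by at most [2d - 1], so the invariant survives until no such vertex is left. *)
Lemma exists_mindeg_subset (S : {set T}) : d.*2 * #|S| < deg_sum S + #|S| ->
  exists2 S', S' != set0 & forall x, x \in S' -> d <= #|[set y in S' | g x y]|.
Proof.
move: {2}#|S| (erefl #|S|) => m; elim: m S => [|m IH] S S_card.
  by rewrite S_card muln0 addn0 (cards0_eq S_card) /deg_sum big_set0.
have [x /andP [Sx deg_lt]|] := pickP [pred x | (x \in S) && (deg_in S x < d)].
  move=> sum_lt; apply: (IH (S :\ x)); first by move: S_card; rewrite (cardsD1 x) Sx; lia.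
  by move: sum_lt; rewrite (deg_sumD1 Sx) (cardsD1 x S) Sx -!muln2; nia.
move=> big_deg _; exists S; first by rewrite -card_gt0 S_card.
by move=> x Sx; rewrite -deg_inE leqNgt; have := big_deg x; rewrite /= Sx /= => ->.
Qed.
End Peeling.

Lemma deg_sumT (T : finType) (g : rel T) : deg_sum g setT = \sum_a \sum_b g a b.
Proof. by apply: eq_big => [a|a _]; rewrite ?inE //; apply: eq_bigl => b; rewrite inE. Qed.

Lemma sum_offdiag (T : finType) : \sum_(x : T) \sum_(y : T) (x != y : nat) = #|T| * #|T|.-1.
Proof.
rewrite -sum_nat_const; apply: eq_bigr => x _.
rewrite (bigD1 x) //= eqxx add0n -(cardC1 x) -sum1_card.
by apply: eq_bigr => y; rewrite eq_sym => ->.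
Qed.

Lemma double_bin2 n : ('C(n, 2)).*2 = n * n.-1.
Proof. by rewrite bin2 even_halfK //; case: n => //= m; rewrite oddM oddS andNb. Qed.

Definition blue_both n (blue : rel 'I_n) : rel 'I_n :=
  fun x y => [&& x != y, blue x y & blue y x].

Lemma blue_both_sym n (blue : rel 'I_n) : symmetric (blue_both blue).
Proof. by move=> x y; rewrite /blue_both eq_sym [blue y x && _]andbC. Qed.

Lemma blue_both_irr n (blue : rel 'I_n) : irreflexive (blue_both blue).
Proof. by move=> x; rewrite /blue_both eqxx. Qed.

Lemma num_blueE n (blue : rel 'I_n) :
  num_blue blue = \sum_x \sum_y ((x != y) && blue x y : nat).
Proof.
rewrite /num_blue -sum1_card big_mkcond pair_bigA /=.
by apply: eq_bigr => -[x y] _; rewrite inE; case: (_ && _).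
Qed.

Lemma num_blue_le n (blue : rel 'I_n) : num_blue blue <= n * n.-1.
Proof.
rewrite num_blueE; have := sum_offdiag 'I_n; rewrite card_ord => <-.
by apply: leq_sum => x _; apply: leq_sum => y _; case: (x != y); case: (blue x y).
Qed.

Lemma num_blue_double_le n (blue : rel 'I_n) :
  (num_blue blue).*2 <= n * n.-1 + deg_sum (blue_both blue) setT.
Proof.
rewrite -addnn {2}num_blueE exchange_big /= num_blueE -big_split deg_sumT.
have := sum_offdiag 'I_n; rewrite card_ord => <-; rewrite -big_split /=.
apply: leq_sum => x _; rewrite -!big_split /=; apply: leq_sum => y _.
by rewrite /blue_both (eq_sym y x); case: (x != y); case: (blue x y); case: (blue y x).
Qed.

Lemma oriented_tree_undirected (V : finType) (E : rel V) :
  oriented_tree E -> tree_rel (undirected E).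
Proof.
case=> _ [Eirr _] Econn Eacyc; split=> // [x y|x]; first by rewrite /undirected orbC.
by rewrite /undirected orbb (negbTE (Eirr x)).
Qed.

Import Order.TTheory GRing.Theory Num.Theory.
Local Open Scope ring_scope.

Lemma lt_of_ceil (R : archiRealDomainType) (x : R) k : k.+1%:Z <= Num.ceil x -> k%:R < x.
Proof.
move=> k_le; apply: le_lt_trans (ceilB1_lt x).
have : k%:Z <= Num.ceil x - 1 by lia.
by rewrite -(ler_int R).
Qed.

Lemma deg_sum_blue_both_large (R : realFieldType) (eps : R) n (blue : rel 'I_n) k :
  (2 <= n)%N -> (1 + eps) * ('C(n, 2))%:R <= (num_blue blue)%:R ->
  k%:R < eps * n%:R / 2 -> (k.*2 * n < deg_sum (blue_both blue) setT + n)%N.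
Proof.
move=> n_ge2 many_blue k_lt.
have C2 : ('C(n, 2))%:R * 2 = n%:R * (n%:R - 1) :> R.
  by rewrite -natrM muln2 double_bin2 natrM -subn1 natrB //; lia.
have C_gt0 : 0 < ('C(n, 2))%:R :> R by rewrite ltr0n bin_gt0.
have B_le : (num_blue blue)%:R <= n%:R * (n%:R - 1) :> R.
  by rewrite -C2 -natrM ler_nat muln2 double_bin2 num_blue_le.
have B2_le : 2 * (num_blue blue)%:R
             <= n%:R * (n%:R - 1) + (deg_sum (blue_both blue) setT)%:R :> R.
  by rewrite -C2 -!natrM -natrD ler_nat mul2n muln2 double_bin2 num_blue_double_le.
have n_gt0 : 0 < n%:R :> R by rewrite ltr0n; lia.
have eps_le1 : eps <= 1 by nra.
have D_ge : eps * (n%:R * (n%:R - 1)) <= (deg_sum (blue_both blue) setT)%:R by nra.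
have k2_lt : k%:R * 2 * n%:R < eps * n%:R * n%:R by nra.
rewrite -(ltr_nat R) natrD !natrM -muln2 natrM.
nra.
Qed.

Theorem mainTheorem9 (R : archiRealFieldType) (eps : R) (n : nat)
  (blue : rel 'I_n) :
  0 < eps -> (2 <= n)%N ->
  (1 + eps) * ('C(n, 2))%:R <= (num_blue blue)%:R ->
  forall (V : finType) (E : rel V),
    oriented_tree E ->
    (#|V|%:Z <= Num.ceil (eps * n%:R / 2)) ->
    blue_copy blue E.
Proof.
(* [0 < eps] also follows from the size bound on [V]. *)
move=> _ n_ge2 many_blue V E E_tree V_le.
have [k V_card] : exists k, #|V| = k.+1 by exists #|V|.-1; rewrite prednK //; case: E_tree.
rewrite V_card in V_le.
have := deg_sum_blue_both_large n_ge2 many_blue (lt_of_ceil V_le).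
rewrite -[X in (_ * X < _ + X)%N]card_ord -cardsT.
have [sym irr] := (blue_both_sym blue, blue_both_irr blue).
move/(exists_mindeg_subset sym irr) => [S /set0Pn [x0 S_x0] S_mindeg].
have [f [f_inj _ f_hom]] := embed_tree sym irr S_x0 S_mindeg
  (oriented_tree_undirected E_tree) (eq_leq V_card) (leqnn k).
exists f; split=> // x y Exy.
have Uxy : undirected E x y by rewrite /undirected Exy.
by have /and3P [_ ->] := f_hom x y Uxy.
Qed.
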